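(* Let $m\ge1$ and $1\le t\le 2^{m-1}$ be integers and $p=t/2^m$. Let $f:\{0,1\}^n\to\{0,1\}$ and let $g=\mathrm{Red}(f):\{0,1\}^{mn}\to\{0,1\}$ be defined below. Then \[ \sum_{i=1}^{mn}I_i(g)^2\le 12p^2\lfloor\log(1/p)\rfloor\sum_{i=1}^nI_i(f)^2, \] where the influences on $f$ are w.r.t. $\mu_p$ and those on $g$ are w.r.t. the uniform measure $\mu_{1/2}$.
   Context: For $0<p<1$, $\mu_p$ is the product measure on $\{0,1\}^n$ with $\mu_p(x)=p^{\sum_i x_i}(1-p)^{n-\sum_i x_i}$. For a function $f$ on $\{0,1\}^n$ and $1\le i\le n$, the influence of coordinate $i$ w.r.t. $\mu_p$ is $I_i(f)=\Pr_{x\sim\mu_p}[f(x)\ne f(x\oplus e_i)]$, where $x\oplus e_i$ is $x$ with its $i$-th coordinate flipped. Reduction: write $y\in\{0,1\}^{mn}$ as $(y^1,\dots,y^n)$, $y^i=(y^i_1,\dots,y^i_m)\in\{0,1\}^m$, where $y^i_j$ is coordinate $(i-1)m+j$ of $y$. Let $\mathrm{Bin}(y^i)=\sum_{j=0}^{m-1}2^jy^i_{m-j}$, $h(y^i)=1$ if $\mathrm{Bin}(y^i)\ge 2^m-t$ and $0$ otherwise, and $g(y)=f(h(y^1),\dots,h(y^n))$. $\log$ is base 2. *)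

From HB Require Import structures.
From mathcomp Require Import all_boot all_order all_algebra.
From mathcomp Require Import reals exp.
Set Implicit Arguments. Unset Strict Implicit. Unset Printing Implicit Defensive.
Import Order.TTheory GRing.Theory Num.Theory.
Local Open Scope ring_scope.

(* The hypercube {0,1}^n, coordinates indexed 0..n-1 (paper: 1..n). *)
Definition cube (n : nat) := {ffun 'I_n -> bool}.

Definition mu {R : pzRingType} (p : R) {n : nat} (x : cube n) : R :=
  \prod_(i < n) (if x i then p else 1 - p).

Definition flip {n : nat} (x : cube n) (i : 'I_n) : cube n :=
  [ffun j => if j == i then ~~ x j else x j].

Definition infl {R : pzRingType} (p : R) {n : nat} (f : cube n -> bool) (i : 'I_n) : R :=
  \sum_(x : cube n | f x != f (flip x i)) mu p x.

Lemma blk_lt (m n : nat) (i : 'I_n) (k : 'I_m) : (i * m + k < m * n)%N.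
Proof.
have Hi := ltn_ord i; have Hk := ltn_ord k.
apply: (@leq_trans (i * m + m)); first by rewrite ltn_add2l.
by rewrite -mulSnr mulnC leq_mul2l Hi orbT.
Qed.

(* block y^i (0-based i): y^i_{k+1} is coordinate i*m + k (0-based),
   i.e. coordinate (i-1)m + j in the paper's 1-based convention. *)
Definition block {m n : nat} (y : cube (m * n)) (i : 'I_n) : 'I_m -> bool :=
  fun k => y (Ordinal (blk_lt i k)).

(* Bin(y^i) = sum_{j=0}^{m-1} 2^j y^i_{m-j}; with 0-based k = m-1-j. *)
Definition Bin (m : nat) (b : 'I_m -> bool) : nat :=
  \sum_(k < m) 2 ^ (m - 1 - k) * b k.

Definition hfun (m t : nat) (b : 'I_m -> bool) : bool := (2 ^ m - t <= Bin b)%N.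

Definition Red (m t : nat) {n : nat} (f : cube n -> bool) : cube (m * n) -> bool :=
  fun y => f [ffun i => hfun t (block y i)].
Arguments Red m t {n} f y.

From HB Require Import structures.
From mathcomp Require Import all_boot all_order all_algebra.
From mathcomp Require Import reals exp.
From mathcomp Require Import zify ring lra.
Import Order.TTheory GRing.Theory Num.Theory.
Set Implicit Arguments. Unset Strict Implicit. Unset Printing Implicit Defensive.

(* Coordinate (i, k) of g is pivotal at y iff bit k is pivotal for h on the block y^i
   and coordinate i is pivotal for f at z = (h(y^1), ..., h(y^n)).  The map h pushes
   the uniform measure on {0,1}^m forward to the p-biased bit, and pivotality of i
   for f does not depend on z_i, so I_(i,k)(g) = I_i(f) I_k(h).  Flipping bit k moves
   Bin(y^i) by 2^(m-1-k), so h changes for at most 2 min(2^(m-1-k), t) of the 2^m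
   blocks; the squares of these bounds sum to at most 4 (4/3 + m - 1 - floor(log t))
   t^2 / 4^m, and both 1 and m - 1 - floor(log t) are at most floor(log(1/p)). *)

Lemma sum_nat_itv_indicator (N a b : nat) :
  \sum_(0 <= v < N) (a <= v < b) = minn N b - a.
Proof.
elim: N => [|N IH]; first by rewrite big_geq // min0n.
rewrite big_nat_recr //= IH.
case: (leqP a N) => h1; case: (ltnP N b) => h2 /=; lia.
Qed.

Lemma geom_sum4 (M : nat) : 3 * \sum_(j < M) 4 ^ j + 1 = 4 ^ M.
Proof.
elim: M => [|M IH]; first by rewrite big_ord0.
rewrite big_ord_recr /= expnS; set S := \sum_(i < M) _ in IH *; lia.
Qed.

Lemma leq_exp2_subn1 (t m : nat) : t <= 2 ^ (m - 1) -> t <= 2 ^ m.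
Proof. by move/leq_trans; apply; rewrite leq_exp2l // leq_subr. Qed.

Lemma exp2_sq (j : nat) : (2 ^ j) ^ 2 = 4 ^ j.
Proof. by rewrite -expnM mulnC expnM. Qed.

Lemma sum_minn_exp2_sq (t a M : nat) : 2 ^ a <= t -> t < 2 ^ a.+1 ->
  3 * \sum_(j < M) minn (2 ^ j) t ^ 2 <= (4 + 3 * (M - a.+1)) * t ^ 2.
Proof.
move=> ta ta1; elim: M => [|M IH]; first by rewrite big_ord0.
case: (ltnP M a.+1) => hM.
  have le_geom : \sum_(j < M.+1) minn (2 ^ j) t ^ 2 <= \sum_(j < M.+1) 4 ^ j.
    by apply: leq_sum => j _; rewrite -exp2_sq leq_exp2r ?geq_minl.
  have le_t : 4 ^ M.+1 <= 4 * t ^ 2.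
    by rewrite expnS leq_mul2l -exp2_sq leq_exp2r ?(leq_trans _ ta) ?leq_exp2l.
  have := geom_sum4 M.+1; lia.
rewrite big_ord_recr /=.
have -> : minn (2 ^ M) t = t.
  by apply/minn_idPr/ltnW/(leq_trans ta1); rewrite leq_exp2l.
set S := \sum_(i < M) _ in IH *.
have -> : M.+1 - a.+1 = (M - a.+1).+1 by lia.
nia.
Qed.

Lemma sum_minn_exp2_rev (m t : nat) :
  \sum_(k < m) minn (2 ^ (m - 1 - k)) t ^ 2 = \sum_(j < m) minn (2 ^ j) t ^ 2.
Proof.
rewrite (reindex_inj rev_ord_inj); apply: eq_bigr => k _.
by congr (minn (2 ^ _) _ ^ 2); have := ltn_ord k; rewrite /=; lia.
Qed.

Definition bval (M : nat) (c : nat -> bool) := \sum_(j < M) 2 ^ j * c j.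

Lemma bval_S M c : bval M.+1 c = bval M c + 2 ^ M * c M.
Proof. by rewrite /bval big_ord_recr. Qed.

Lemma bval_lt M c : bval M c < 2 ^ M.
Proof.
elim: M => [|M IH]; first by rewrite /bval big_ord0.
by rewrite bval_S expnS; case: (c M) => /=; lia.
Qed.

Lemma bval_inj M c c' : bval M c = bval M c' -> {in gtn M, c =1 c'}.
Proof.
elim: M => [|M IH] // E j; rewrite inE ltnS leq_eqVlt.
have := bval_lt M c; have := bval_lt M c'; move: E; rewrite !bval_S.
have [top|] := eqVneq (c M) (c' M); last by case: (c M); case: (c' M) => //=; lia.
rewrite top => E _ _; have low : bval M c = bval M c' by lia.
by case/orP=> [/eqP ->|]; last exact: IH.
Qed.

Lemma flipE n (x : cube n) (i j : 'I_n) : flip x i j = if j == i then ~~ x j else x j.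
Proof. by rewrite ffunE. Qed.

Lemma flipK n (i : 'I_n) : involutive (flip^~ i).
Proof. by move=> x; apply/ffunP => j; rewrite !ffunE; case: eqP; rewrite ?negbK. Qed.

Lemma reindex_flip (R : Type) (idx : R) (op : Monoid.com_law idx) n (i : 'I_n)
    (F : cube n -> R) :
  \big[op/idx]_x F (flip x i) = \big[op/idx]_x F x.
Proof.
by rewrite [RHS](reindex (flip^~ i)) //; exists (flip^~ i) => x _; rewrite flipK.
Qed.

Section BinaryValue.
Variable m : nat.
Implicit Types (b : cube m) (k : 'I_m).

Definition bits_le (b : 'I_m -> bool) (j : nat) : bool :=
  if insub j is Some o then b (rev_ord o) else false.

Lemma Bin_bval (b : 'I_m -> bool) : Bin b = bval m (bits_le b).
Proof.
rewrite /bval /Bin (reindex_inj rev_ord_inj); apply: eq_bigr => j _.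
rewrite /bits_le valK; congr (2 ^ _ * _).
by have := ltn_ord j; rewrite /=; lia.
Qed.

Lemma Bin_lt (b : 'I_m -> bool) : Bin b < 2 ^ m.
Proof. by rewrite Bin_bval bval_lt. Qed.

Lemma Bin_inj : injective (fun b : cube m => Bin b).
Proof.
move=> b b'; rewrite !Bin_bval => /bval_inj eq_bits; apply/ffunP => k.
by have := eq_bits _ (ltn_ord (rev_ord k)); rewrite /bits_le valK rev_ordK.
Qed.

Lemma sum_Bin (F : nat -> nat) :
  \sum_(b : cube m) F (Bin b) = \sum_(0 <= v < 2 ^ m) F v.
Proof.
pose Binord b : 'I_(2 ^ m) := Ordinal (Bin_lt b).
have Binord_bij : bijective Binord.
  apply: inj_card_bij => [b b' /(congr1 val)|]; first exact: Bin_inj.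
  by rewrite card_ffun card_bool !card_ord.
by rewrite big_mkord (reindex Binord) //; exact: onW_bij.
Qed.

Lemma Bin_flip b k :
  Bin (flip b k) + 2 ^ (m - 1 - k) * b k = Bin b + 2 ^ (m - 1 - k) * ~~ b k.
Proof.
rewrite /Bin (bigD1 k) //= [in RHS](bigD1 k) //= flipE eqxx.
rewrite (eq_bigr (fun i : 'I_m => 2 ^ (m - 1 - i) * b i)) => [|i /negbTE ne_ik].
  by set S := bigop _ _ _; lia.
by rewrite flipE ne_ik.
Qed.

End BinaryValue.

Section Threshold.
Variables m t : nat.
Hypothesis le_t_2m : t <= 2 ^ m.

Lemma sum_hfun : \sum_(b : cube m) hfun t b = t.
Proof.
under eq_bigr => b _ do rewrite /hfun -[_ <= _]andbT -(Bin_lt b).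
by rewrite (sum_Bin m (fun v => 2 ^ m - t <= v < 2 ^ m)) sum_nat_itv_indicator minnn; lia.
Qed.

(* A flip across the threshold 2^m - t moves Bin by 2^(m-1-k), so it starts
   in the window [2^m - t - 2^(m-1-k), 2^m - t). *)
Lemma sens_hfun_le (k : 'I_m) :
  \sum_(b : cube m) (hfun t b != hfun t (flip b k)) <= 2 * minn (2 ^ (m - 1 - k)) t.
Proof.
set w := 2 ^ (m - 1 - k); set T := 2 ^ m - t.
pose up (b : cube m) : nat := ~~ hfun t b && hfun t (flip b k).
have split_up : \sum_(b : cube m) (hfun t b != hfun t (flip b k)) =
                \sum_(b : cube m) up b + \sum_(b : cube m) up (flip b k).
  rewrite -big_split; apply: eq_bigr => b _; rewrite /up flipK.
  by case: (hfun t b); case: (hfun t (flip b k)).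
rewrite split_up (reindex_flip _ k up) addnn -mul2n leq_mul2l /=.
rewrite leq_min; apply/andP; split.
  apply: (@leq_trans (minn (2 ^ m) T - (T - w))); last lia.
  rewrite -sum_nat_itv_indicator -(sum_Bin m (fun v => T - w <= v < T)).
  apply: leq_sum => b _; have := Bin_flip b k; rewrite /up /hfun -/w -/T.
  case: (leqP T (Bin b)) => //= lt_b; case: leqP => //= ge_flip.
  by case: (b k) => /=; lia.
apply: (@leq_trans (\sum_(b : cube m) hfun t (flip b k))).
  by apply: leq_sum => b _; rewrite /up; case: (hfun t _); rewrite ?andbF.
by rewrite (reindex_flip _ k (fun b : cube m => nat_of_bool (hfun t b))) sum_hfun.
Qed.

End Threshold.

Section Blocks.
Variables m n : nat.

Definition block_index (ik : 'I_n * 'I_m) : 'I_(m * n) := Ordinal (blk_lt ik.1 ik.2).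

Lemma block_size_gt0 (c : 'I_(m * n)) : 0 < m.
Proof. by case: m c => [[]|]; rewrite ?mul0n. Qed.

Lemma block_div_lt (c : 'I_(m * n)) : c %/ m < n.
Proof. by rewrite ltn_divLR ?(block_size_gt0 c) // [_ * m]mulnC. Qed.

Definition block_coord (c : 'I_(m * n)) : 'I_n * 'I_m :=
  (Ordinal (block_div_lt c), Ordinal (ltn_pmod c (block_size_gt0 c))).

Lemma block_indexK : cancel block_index block_coord.
Proof.
move=> [i k]; have lt_k := ltn_ord k; congr pair; apply: val_inj => /=.
  by rewrite divnMDl ?divn_small ?addn0 //; case: m k lt_k => [[]|].
by rewrite modnMDl modn_small.
Qed.

Lemma block_coordK : cancel block_coord block_index.
Proof. by move=> c; apply: val_inj; rewrite /= -divn_eq. Qed.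

Lemma block_index_bij : bijective block_index.
Proof. by exists block_coord; [exact: block_indexK | exact: block_coordK]. Qed.

Definition concat_blocks (Y : {ffun 'I_n -> cube m}) : cube (m * n) :=
  [ffun c => Y (block_coord c).1 (block_coord c).2].

Lemma concat_blocksE Y i k : concat_blocks Y (block_index (i, k)) = Y i k.
Proof. by rewrite ffunE block_indexK. Qed.

Lemma concat_blocks_bij : bijective concat_blocks.
Proof.
pose split_blocks (y : cube (m * n)) : {ffun 'I_n -> cube m} :=
  [ffun i => [ffun k => y (block_index (i, k))]].
exists split_blocks => [Y|y].
  by apply/ffunP => i; apply/ffunP => k; rewrite !ffunE block_indexK.
by apply/ffunP => c; rewrite !ffunE -[in RHS](block_coordK c); case: block_coord.
Qed.

Lemma mu_concat_blocks (R : comPzRingType) (q : R) Y :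
  mu q (concat_blocks Y) = (\prod_(i < n) mu q (Y i))%R.
Proof.
rewrite /mu (reindex block_index) /=; last exact: onW_bij block_index_bij.
by rewrite pair_big; apply: eq_bigr => -[i k] _; rewrite concat_blocksE.
Qed.

Definition flip_block (Y : {ffun 'I_n -> cube m}) i k : {ffun 'I_n -> cube m} :=
  [ffun l => if l == i then flip (Y i) k else Y l].

Lemma flip_concat_blocks Y i k :
  flip (concat_blocks Y) (block_index (i, k)) = concat_blocks (flip_block Y i k).
Proof.
apply/ffunP => c; rewrite -(block_coordK c); case: (block_coord c) => l k'.
rewrite !ffunE block_indexK (inj_eq (can_inj block_indexK)) xpair_eqE.
by case: (eqVneq l i) => [->|] /=; rewrite ?ffunE // andbT.
Qed.

End Blocks.

Section Reduction.
Variables m t n : nat.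
Variable f : cube n -> bool.

Definition hmap (Y : {ffun 'I_n -> cube m}) : cube n := [ffun l => hfun t (Y l)].

Lemma Red_concat_blocks Y : Red m t f (concat_blocks Y) = f (hmap Y).
Proof.
congr f; apply/ffunP => l; rewrite !ffunE /hfun /Bin.
by under eq_bigr => k _ do rewrite /block -[Ordinal _]/(block_index (l, k)) concat_blocksE.
Qed.

Lemma hmap_flip_block Y i k :
  hmap (flip_block Y i k) =
  if hfun t (Y i) != hfun t (flip (Y i) k) then flip (hmap Y) i else hmap Y.
Proof.
apply/ffunP => l; case: ifP => [/negPf|/negbFE/eqP] sens_k; rewrite !ffunE;
  case: (eqVneq l i) => [->|ne_li] //=.
by case: (hfun t (Y i)) sens_k; case: (hfun t _).
Qed.

Lemma Red_sens_block Y i k :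
  let y := concat_blocks Y in
  (Red m t f y != Red m t f (flip y (block_index (i, k)))) =
  (hfun t (Y i) != hfun t (flip (Y i) k)) && (f (hmap Y) != f (flip (hmap Y) i)).
Proof.
rewrite /= flip_concat_blocks !Red_concat_blocks hmap_flip_block.
by case: ifP; rewrite ?eqxx.
Qed.

End Reduction.

Local Open Scope ring_scope.

Section ProductSums.
Variables (R : comPzRingType) (n : nat).

Lemma sum_prod_pushforward (T : finType) (h : T -> bool) (phi : 'I_n -> T -> R)
    (F : cube n -> R) :
  \sum_(Y : {ffun 'I_n -> T}) (\prod_l phi l (Y l)) * F [ffun l => h (Y l)] =
  \sum_(z : cube n) F z * \prod_l \sum_(b | h b == z l) phi l b.
Proof.
pose hmapY (Y : {ffun 'I_n -> T}) : cube n := [ffun l => h (Y l)].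
rewrite (partition_big hmapY xpredT) //=.
apply: eq_bigr => z _; rewrite bigA_distr_big_dep big_distrr /=.
apply: eq_big => [Y|Y /eqP <-]; last by rewrite mulrC.
apply/eqP/familyP => [<- l|h_z]; first by rewrite ffunE unfold_in.
by apply/ffunP => l; rewrite ffunE; apply/eqP; exact: h_z.
Qed.

Lemma sum_prod_flip_invariant (F : cube n -> R) (i : 'I_n) (c : 'I_n -> bool -> R) :
  (forall z, F (flip z i) = F z) ->
  (\sum_z F z * \prod_l c l (z l)) *+ 2 =
  (c i true + c i false) * \sum_z F z * \prod_(l | l != i) c l (z l).
Proof.
move=> F_flip; rewrite mulr2n.
rewrite -[X in _ + X](reindex_flip _ i (fun z => F z * \prod_l c l (z l))).
rewrite -big_split big_distrr /=.
apply: eq_bigr => z _; rewrite F_flip (bigD1 i) //= [X in _ + _ * X](bigD1 i) //=.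
have -> : \prod_(l | l != i) c l (flip z i l) = \prod_(l | l != i) c l (z l).
  by apply: eq_bigr => l /negPf ne_li; rewrite flipE ne_li.
rewrite flipE eqxx.
by case: (z i) => /=; ring.
Qed.

End ProductSums.

Lemma sum_mu (R : pzRingType) (q : R) n : \sum_(x : cube n) mu q x = 1.
Proof.
rewrite /mu -(bigA_distr_bigA (fun _ (b : bool) => if b then q else 1 - q)) /=.
by rewrite big1 // => i _; rewrite big_bool /= addrC subrK.
Qed.

Lemma infl_ge0 (R : numDomainType) (q : R) n (g : cube n -> bool) i :
  0 <= q <= 1 -> 0 <= infl q g i.
Proof.
case/andP=> q_ge0 q_le1; apply: sumr_ge0 => x _; apply: prodr_ge0 => l _.
by case: (x l); rewrite ?subr_ge0.
Qed.

Section Influence.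
Variable R : realType.
Variables m t n : nat.
Variable f : cube n -> bool.
Hypothesis le_t_2m : (t <= 2 ^ m)%N.

Let h (b : cube m) := hfun t b.

Lemma mu_half (b : cube m) : mu (2^-1 : R) b = (2 ^ m)%:R^-1.
Proof.
rewrite /mu (eq_bigr (fun _ => 2^-1)) => [|k _]; last by case: (b k) => //; lra.
by rewrite prodr_const card_ord natrX exprVn.
Qed.

Lemma sum_mu_half_cond (P : pred (cube m)) :
  \sum_(b | P b) mu (2^-1 : R) b = (\sum_(b : cube m) P b)%:R / (2 ^ m)%:R.
Proof.
rewrite big_mkcond natr_sum mulr_suml; apply: eq_bigr => b _.
by rewrite mu_half; case: (P b); rewrite ?mul1r ?mul0r.
Qed.

Lemma sum_mu_half_hfun (beta : bool) :
  \sum_(b | h b == beta) mu (2^-1 : R) b =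
  if beta then t%:R / (2 ^ m)%:R else 1 - t%:R / (2 ^ m)%:R.
Proof.
have sum_h : \sum_(b | h b) mu (2^-1 : R) b = t%:R / (2 ^ m)%:R.
  by rewrite sum_mu_half_cond sum_hfun.
have := sum_mu (2^-1 : R) m; rewrite (bigID h) /= sum_h => total.
by case: beta; [under eq_bigl do rewrite eqb_id | under eq_bigl do rewrite eqbF_neg]; lra.
Qed.

Definition block_weight i k (l : 'I_n) (b : cube m) : R :=
  mu (2^-1) b * (if l == i then (h b != h (flip b k))%:R else 1).

Lemma infl_Red_pushforward i k :
  infl (2^-1 : R) (Red m t f) (block_index (i, k)) =
  \sum_(z : cube n) (f z != f (flip z i))%:R *
                   \prod_l \sum_(b | h b == z l) block_weight i k l b.
Proof.
rewrite -(sum_prod_pushforward h) /infl (reindex (@concat_blocks m n)) /=; last first.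
  exact: onW_bij (concat_blocks_bij m n).
rewrite big_mkcond; apply: eq_bigr => Y _.
rewrite Red_sens_block mu_concat_blocks /block_weight big_split /= -big_mkcond big_pred1_eq.
by case: (_ != _); case: (_ != _); rewrite /= ?mulr1 ?mulr0.
Qed.

Lemma infl_Red i k :
  infl (2^-1 : R) (Red m t f) (block_index (i, k)) =
  infl (t%:R / (2 ^ m)%:R) f i * infl (2^-1 : R) h k.
Proof.
set p : R := t%:R / (2 ^ m)%:R.
pose D z : R := (f z != f (flip z i))%:R.
pose bern (l : 'I_n) (beta : bool) := if beta then p else 1 - p.
pose c l beta := \sum_(b | h b == beta) block_weight i k l b.
have D_flip z : D (flip z i) = D z by rewrite /D flipK eq_sym.
have c_bern l : l != i -> c l =1 bern l.
  move=> /negPf ne_li beta; rewrite /c /bern /p -sum_mu_half_hfun.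
  by apply: eq_bigr => b _; rewrite /block_weight ne_li mulr1.
have c_i : c i true + c i false = infl (2^-1) h k.
  rewrite /c /block_weight eqxx /infl [RHS]big_mkcond [RHS](bigID h) /=.
  by congr (_ + _); apply: eq_big => [b|b _]; rewrite ?eqb_id ?eqbF_neg //;
    case: (_ != _); rewrite ?mulr1 ?mulr0.
have infl_f : infl p f i = \sum_z D z * \prod_l bern l (z l).
  rewrite /infl big_mkcond; apply: eq_bigr => z _.
  by rewrite /D; case: (_ != _); rewrite ?mul1r ?mul0r.
apply: (@pmulrnI _ 2) => //.
rewrite infl_Red_pushforward (sum_prod_flip_invariant c D_flip) c_i.
rewrite [infl p f i * _]mulrC -mulrnAr infl_f (sum_prod_flip_invariant bern D_flip).
have -> : bern i true + bern i false = 1 by rewrite /bern addrC subrK.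
rewrite mul1r; congr (_ * _); apply: eq_bigr => z _; congr (_ * _).
by apply: eq_bigr => l ne_li; rewrite c_bern.
Qed.

Lemma infl_hfun_le k :
  infl (2^-1 : R) h k <= (2 * minn (2 ^ (m - 1 - k)) t)%:R / (2 ^ m)%:R.
Proof.
by rewrite /infl sum_mu_half_cond ler_wpM2r ?invr_ge0 ?ler0n // ler_nat sens_hfun_le.
Qed.

Lemma sum_sqr_infl_hfun_le_minn :
  \sum_(k < m) infl (2^-1 : R) h k ^+ 2
    <= 4 * (\sum_(j < m) minn (2 ^ j) t ^ 2)%N%:R / (2 ^ m)%:R ^+ 2.
Proof.
rewrite -sum_minn_exp2_rev natr_sum mulr_sumr mulr_suml; apply: ler_sum => k _.
apply: (@le_trans _ _ (((2 * minn (2 ^ (m - 1 - k)) t)%N%:R / (2 ^ m)%:R) ^+ 2)).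
  by rewrite ler_sqr ?nnegrE ?divr_ge0 ?ler0n ?infl_ge0 ?infl_hfun_le //; lra.
by rewrite natrX natrM expr_div_n exprMn mulrA; lra.
Qed.

End Influence.

Lemma le_floor_log2 (R : realType) (z t m : nat) :
  (0 < t)%N -> (2 ^ z * t <= 2 ^ m)%N ->
  z%:Z <= Num.floor (ln (1 / (t%:R / (2 ^ m)%:R)) / ln 2 : R).
Proof.
move=> t_gt0 le_2zt; rewrite floor_ge_int.
have ln2_gt0 : 0 < ln (2 : R) by apply: ln_gt0; rewrite ltr1n.
have t_pos : (0 : R) < t%:R by rewrite ltr0n.
have N_pos : (0 : R) < (2 ^ m)%:R by rewrite ltr0n expn_gt0.
rewrite ler_pdivlMr // -[z%:~R]/(z%:R : R) [z%:R * _]mulr_natl -lnXn //.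
rewrite ler_ln ?posrE ?exprn_gt0 ?div1r ?invr_gt0 ?divr_gt0 //.
by rewrite invf_div ler_pdivlMr // -natrX -natrM ler_nat.
Qed.

Lemma sum_sqr_infl_hfun_le (R : realType) (m t : nat) :
  (1 <= m)%N -> (1 <= t)%N -> (t <= 2 ^ (m - 1))%N ->
  let p : R := t%:R / (2 ^ m)%:R in
  \sum_(k < m) infl (2^-1 : R) (fun b : cube m => hfun t b) k ^+ 2
    <= 12 * p ^+ 2 * (Num.floor (ln (1 / p) / ln 2))%:~R.
Proof.
move=> m_ge1 t_ge1 le_t_2m1; cbv zeta; set p : R := t%:R / _; set L := Num.floor _.
have le_t_2m := leq_exp2_subn1 le_t_2m1.
set a := trunc_log 2 t.
have le_2a_t : (2 ^ a <= t)%N by exact: trunc_logP.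
have lt_t_2a1 : (t < 2 ^ a.+1)%N by exact: trunc_log_ltn.
have L_ge1 : 1%:Z <= L.
  apply: le_floor_log2 => //; rewrite expn1.
  by rewrite -[in X in (_ <= X)%N](subnK m_ge1) addn1 expnS leq_mul2l le_t_2m1.
have L_geZ : (m - a.+1)%N%:Z <= L.
  have le_a1_m : (a.+1 <= m)%N.
    by move: (leq_trans le_2a_t le_t_2m1); rewrite leq_exp2l //; lia.
  apply: le_floor_log2 => //; apply: (@leq_trans (2 ^ (m - a.+1) * 2 ^ a.+1)).
    by rewrite leq_mul2l ltnW ?orbT.
  by rewrite -expnD subnK.
apply: (le_trans (sum_sqr_infl_hfun_le_minn R le_t_2m)).
move: (sum_minn_exp2_sq m le_2a_t lt_t_2a1) L_ge1 L_geZ.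
set S := (\sum_(j < m) _)%N; set Z := (m - a.+1)%N.
rewrite -(ler_nat R) -!(ler_int R) !natrM natrD natrM -expr2 /p expr_div_n.
set T : R := t%:R ^+ 2; set Lr : R := L%:~R => le_3S L_ge1 L_geZ.
have T_ge0 : 0 <= T by rewrite sqr_ge0.
have TLZ : 0 <= T * (Lr - Z%:R) by rewrite mulr_ge0 // subr_ge0.
have TL1 : 0 <= T * (Lr - 1) by rewrite mulr_ge0 // subr_ge0.
rewrite mulrA [X in _ <= X]mulrAC ler_wpM2r ?invr_ge0 ?exprn_ge0 //; nra.
Qed.

Unset Implicit Arguments.

Theorem proposition2p6 (R : realType) (m t n : nat) (f : cube n -> bool) :
  (1 <= m)%N -> (1 <= t)%N -> (t <= 2 ^ (m - 1))%N ->
  let p : R := t%:R / (2 ^ m)%:R in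
  \sum_(i < m * n) (infl (2^-1 : R) (Red m t f) i) ^+ 2
    <= 12 * p ^+ 2 * (Num.floor (ln (1 / p) / ln 2))%:~R
       * \sum_(i < n) (infl p f i) ^+ 2.
Proof.
move=> m_ge1 t_ge1 le_t_2m1; cbv zeta; set p : R := t%:R / _.
have le_t_2m := leq_exp2_subn1 le_t_2m1.
rewrite (reindex (@block_index m n)) /=; last exact: onW_bij (block_index_bij m n).
have -> : \sum_(x : 'I_n * 'I_m) infl (2^-1 : R) (Red m t f) (block_index x) ^+ 2 =
    (\sum_(i < n) infl p f i ^+ 2) *
    \sum_(k < m) infl (2^-1 : R) (fun b : cube m => hfun t b) k ^+ 2.
  rewrite big_distrl; under eq_bigr do rewrite big_distrr; rewrite pair_big.
  by apply: eq_bigr => -[i k] _; rewrite infl_Red // exprMn.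
rewrite mulrC; apply: ler_wpM2r; last exact: sum_sqr_infl_hfun_le.
by apply: sumr_ge0 => i _; exact: sqr_ge0.
Qed.
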